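(* Let $d\in\{1,2,3\}$ and $\delta_0\in(0,1)$. (a) $U^{\delta_0,1}(x)\le V^\infty(x)$ for all $|x|>1$. (b) For every $\delta\in(0,1)$ there is $C_\delta>1$, not depending on $\delta_0$, such that $U^{\delta_0,1}(x)\ge(1-\delta)V^\infty(x)$ for all $|x|\ge C_\delta/\delta_0$.
   Context: $V^\infty(x)=2(4-d)|x|^{-2}$ for $x\ne0$. For $\lambda>0$, $U^{\lambda,1}$ is the unique nonnegative function continuous on $\{|x|\ge1\}$ and $C^2$ on $\{|x|>1\}$ solving $\Delta U=U^2$ on $\{|x|>1\}$ with $U=\lambda$ on $\{|x|=1\}$; equivalently $U^{\lambda,1}(x)=-\log\mathbb E_{\delta_x}\exp(-\lambda X_{G_1}(1))$ where $X_{G_1}$ is the exit measure of super-Brownian motion (branching rate one) from $G_1=\{|y|>1\}$. It is radial and tends to $0$ as $|x|\to\infty$. *)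

(* classical reals. Points of R^d are encoded as sequences
   x : nat -> R whose coordinates of index >= d vanish (predicate [inRd]). *)
From Stdlib Require Import Reals Lra Lia.
Open Scope R_scope.

Definition inRd (d : nat) (x : nat -> R) : Prop :=
  forall i, (d <= i)%nat -> x i = 0.

Fixpoint sumsq (d : nat) (x : nat -> R) : R :=
  match d with
  | O => 0
  | S k => sumsq k x + x k ^ 2
  end.

Definition norm (d : nat) (x : nat -> R) : R := sqrt (sumsq d x).

Definition vsub (x y : nat -> R) : nat -> R := fun i => x i - y i.

Definition shift (x : nat -> R) (i : nat) (t : R) : nat -> R :=
  fun j => if Nat.eqb j i then x j + t else x j.

Definition partial_is (u : (nat -> R) -> R) (i : nat) (x : nat -> R) (l : R) : Prop :=
  derivable_pt_lim (fun t => u (shift x i t)) 0 l.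

Definition cont_at (d : nat) (f : (nat -> R) -> R) (x : nat -> R) : Prop :=
  forall eps, 0 < eps -> exists del, 0 < del /\
    forall y, inRd d y -> norm d (vsub y x) < del -> Rabs (f y - f x) < eps.

Definition cont_on (d : nat) (S : (nat -> R) -> Prop) (f : (nat -> R) -> R) : Prop :=
  forall x, inRd d x -> S x ->
  forall eps, 0 < eps -> exists del, 0 < del /\
    forall y, inRd d y -> S y -> norm d (vsub y x) < del -> Rabs (f y - f x) < eps.

Fixpoint sum_to (d : nat) (f : nat -> R) : R :=
  match d with
  | O => 0
  | S k => sum_to k f + f k
  end.

Definition C2_with_laplacian (d : nat) (Omega : (nat -> R) -> Prop)
  (u : (nat -> R) -> R) (L : (nat -> R) -> R) : Prop :=
  exists (Du : nat -> (nat -> R) -> R) (D2u : nat -> nat -> (nat -> R) -> R),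
    forall x, inRd d x -> Omega x ->
      cont_at d u x /\
      (forall i, (i < d)%nat ->
         partial_is u i x (Du i x) /\ cont_at d (Du i) x /\
         (forall j, (j < d)%nat ->
            partial_is (Du i) j x (D2u i j x) /\ cont_at d (D2u i j) x)) /\
      L x = sum_to d (fun i => D2u i i x).

Definition is_U_lam1 (d : nat) (lam : R) (U : (nat -> R) -> R) : Prop :=
  (forall x, inRd d x -> 1 <= norm d x -> 0 <= U x) /\
  cont_on d (fun x => 1 <= norm d x) U /\
  C2_with_laplacian d (fun x => 1 < norm d x) U (fun x => U x ^ 2) /\
  (forall x, inRd d x -> norm d x = 1 -> U x = lam) /\
  (forall eps, 0 < eps -> exists M, forall x, inRd d x -> M < norm d x ->
     Rabs (U x) < eps).

Definition Vinf (d : nat) (x : nat -> R) : R := 2 * (4 - INR d) / (norm d x ^ 2).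

From Stdlib Require Import Reals Lra Lia FunctionalExtensionality Classical ClassicalEpsilon.
From Coquelicot Require Import Rcomplements Hierarchy Derive AutoDerive.
Open Scope R_scope.

(* Both bounds come from a comparison principle for Delta U = U^2 outside the unit ball, applied to
   radial barriers phi(|x|^2).  At a positive maximum of +-(U - phi(|x|^2)) the second derivatives of
   U along the coordinate axes are controlled by those of the barrier, so Delta U = U^2 together with
   the sign of Delta phi(|x|^2) - phi^2 gives a contradiction; such a maximum exists because
   +-(U - phi) is <= 0 on the unit sphere, is eventually small, and is continuous on closed annuli.

   With c = 2(4 - d), V^infty = c/|x|^2 is itself a solution, is >= delta0 on the sphere and >= 0 at
   infinity, so it dominates U.  With b = sqrt(c/delta0), c/(|x| (sqrt|x| + b)^2) is a subsolution
   when d <= 3, is <= delta0 on the sphere and tends to 0, so it lies below U; it exceeds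
   (1 - delta) c/|x|^2 once sqrt|x| >= kappa b, kappa = s/(1 - s), s = sqrt(1 - delta), that is once
   |x| >= kappa^2 c/delta0, whence C_delta = 1 + 8 kappa^2. *)

Lemma sumsq_nonneg d x : 0 <= sumsq d x.
Proof. induction d; simpl; nra. Qed.

Lemma sumsq_shift_out d x i t : (d <= i)%nat -> sumsq d (shift x i t) = sumsq d x.
Proof.
  induction d as [|d IH]; intros Hi; [easy|]. simpl. rewrite IH by lia.
  unfold shift. now replace (Nat.eqb d i) with false by (symmetry; apply Nat.eqb_neq; lia).
Qed.

Lemma sumsq_shift d x i t : (i < d)%nat ->
  sumsq d (shift x i t) = sumsq d x + 2 * x i * t + t ^ 2.
Proof.
  induction d as [|d IH]; intros Hi; [lia|]. simpl.
  destruct (Nat.eq_dec i d) as [->|Hne].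
  - rewrite sumsq_shift_out by lia. unfold shift. rewrite Nat.eqb_refl. ring.
  - rewrite IH by lia. unfold shift.
    replace (Nat.eqb d i) with false by (symmetry; apply Nat.eqb_neq; lia). ring.
Qed.

Lemma inRd_shift d x i t : inRd d x -> (i < d)%nat -> inRd d (shift x i t).
Proof.
  intros Hx Hi j Hj. unfold shift.
  replace (Nat.eqb j i) with false by (symmetry; apply Nat.eqb_neq; lia). auto.
Qed.

Lemma shift_shift x i t s : shift (shift x i t) i s = shift x i (t + s).
Proof. apply functional_extensionality; intro j. unfold shift. destruct (Nat.eqb j i); ring. Qed.

Lemma shift0 x i : shift x i 0 = x.
Proof. apply functional_extensionality; intro j. unfold shift. destruct (Nat.eqb j i); ring. Qed.

Lemma sq_le_sumsq d x i : (i < d)%nat -> x i ^ 2 <= sumsq d x.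
Proof.
  induction d as [|d IH]; intros Hi; [lia|]. simpl.
  destruct (Nat.eq_dec i d) as [->|Hne].
  - pose proof (sumsq_nonneg d x). lra.
  - assert (x i ^ 2 <= sumsq d x) by (apply IH; lia). nra.
Qed.

Lemma norm_sq d x : norm d x ^ 2 = sumsq d x.
Proof. unfold norm. rewrite pow2_sqrt; auto using sumsq_nonneg. Qed.

Lemma Rabs_le_norm d x i : (i < d)%nat -> Rabs (x i) <= norm d x.
Proof.
  intros Hi. unfold norm. rewrite <- sqrt_Rsqr_abs. apply sqrt_le_1_alt.
  rewrite Rsqr_pow2. now apply sq_le_sumsq.
Qed.

Lemma lt_norm_iff d x a : 0 <= a -> a < norm d x <-> a ^ 2 < sumsq d x.
Proof.
  intros Ha. rewrite <- norm_sq. pose proof (sqrt_pos (sumsq d x)). fold (norm d x) in H.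
  split; intros; nra.
Qed.

Lemma le_norm_iff d x a : 0 <= a -> a <= norm d x <-> a ^ 2 <= sumsq d x.
Proof.
  intros Ha. rewrite <- norm_sq. pose proof (sqrt_pos (sumsq d x)). fold (norm d x) in H.
  split; intros; nra.
Qed.

Lemma norm_lt_iff d x a : 0 <= a -> norm d x < a <-> sumsq d x < a ^ 2.
Proof.
  intros Ha. rewrite <- norm_sq. pose proof (sqrt_pos (sumsq d x)). fold (norm d x) in H.
  split; intros; nra.
Qed.

Lemma norm_eq1_iff d x : norm d x = 1 <-> sumsq d x = 1.
Proof.
  rewrite <- norm_sq. pose proof (sqrt_pos (sumsq d x)). fold (norm d x) in H.
  split; intros; nra.
Qed.

Lemma continuity_pt_ball f x : continuity_pt f x ->
  forall eps, 0 < eps -> exists alp, 0 < alp /\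
    forall z, Rabs (z - x) < alp -> Rabs (f z - f x) < eps.
Proof.
  intros Hf eps Heps. destruct (Hf eps Heps) as [alp [Halp Hz]].
  exists alp; split; auto. intros z Hzx. destruct (Req_dec z x) as [->|Hne].
  - rewrite Rminus_eq_0, Rabs_R0; auto.
  - now apply Hz.
Qed.

Lemma sumsq_sub_bound d x y e M : 0 <= e ->
  (forall i, (i < d)%nat -> Rabs (y i - x i) <= e) ->
  (forall i, (i < d)%nat -> Rabs (x i) <= M) ->
  Rabs (sumsq d y - sumsq d x) <= INR d * (e * (2 * M + e)).
Proof.
  intros He. induction d as [|d IH]; intros Hy Hx.
  - simpl. rewrite Rminus_0_r, Rabs_R0. lra.
  - assert (IHd : Rabs (sumsq d y - sumsq d x) <= INR d * (e * (2 * M + e)))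
      by (apply IH; intros; [apply Hy | apply Hx]; lia).
    assert (Hyd := Hy d (Nat.lt_succ_diag_r d)). assert (Hxd := Hx d (Nat.lt_succ_diag_r d)).
    assert (Hsq : Rabs (y d ^ 2 - x d ^ 2) <= e * (2 * M + e)).
    { replace (y d ^ 2 - x d ^ 2) with ((y d - x d) * (2 * x d + (y d - x d))) by ring.
      rewrite Rabs_mult. apply Rmult_le_compat; auto using Rabs_pos.
      eapply Rle_trans; [apply Rabs_triang|]. rewrite Rabs_mult, (Rabs_right 2) by lra. lra. }
    change (sumsq (S d) y) with (sumsq d y + y d ^ 2).
    change (sumsq (S d) x) with (sumsq d x + x d ^ 2). rewrite S_INR.
    replace (sumsq d y + y d ^ 2 - (sumsq d x + x d ^ 2))
      with ((sumsq d y - sumsq d x) + (y d ^ 2 - x d ^ 2)) by ring.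
    eapply Rle_trans; [apply Rabs_triang|]. lra.
Qed.

Lemma cont_on_radial d (P : (nat -> R) -> Prop) phi :
  (forall x, P x -> 0 < sumsq d x) -> (forall S, 0 < S -> continuity_pt phi S) ->
  cont_on d P (fun x => phi (sumsq d x)).
Proof.
  intros HP Hphi x Hx HPx eps Heps.
  destruct (continuity_pt_ball _ _ (Hphi _ (HP x HPx)) eps Heps) as [alp [Halp Hball]].
  set (M := norm d x). set (K := INR d * (2 * M + 1) + 1).
  assert (HK : 0 < K).
  { pose proof (pos_INR d). pose proof (sqrt_pos (sumsq d x)). unfold K, M, norm. nra. }
  exists (Rmin 1 (alp / K)). split; [apply Rmin_pos; [lra | now apply Rdiv_lt_0_compat]|].
  intros y Hy _ Hyx. apply Hball.
  set (e := norm d (vsub y x)) in Hyx.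
  assert (He : 0 <= e) by apply sqrt_pos.
  assert (He1 : e < 1) by (eapply Rlt_le_trans; [exact Hyx | apply Rmin_l]).
  assert (HeK : e * K < alp).
  { assert (e < alp / K) by (eapply Rlt_le_trans; [exact Hyx | apply Rmin_r]).
    apply (Rmult_lt_compat_r K) in H; [|lra]. unfold Rdiv in H.
    now rewrite Rmult_assoc, Rinv_l, Rmult_1_r in H by lra. }
  eapply Rle_lt_trans.
  { apply (sumsq_sub_bound d x y e M He).
    - intros i Hi. apply (Rabs_le_norm d (vsub y x) i Hi).
    - intros i Hi. now apply Rabs_le_norm. }
  pose proof (pos_INR d). assert (0 <= M) by apply sqrt_pos. unfold K in HeK. nra.
Qed.

Lemma cont_on_scal_sub d P f g sg : cont_on d P f -> cont_on d P g ->
  cont_on d P (fun x => sg * (f x - g x)).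
Proof.
  intros Hf Hg x Hx HPx eps Heps.
  set (e := eps / (2 * (Rabs sg + 1))).
  assert (He : 0 < e) by (apply Rdiv_lt_0_compat; [lra | pose proof (Rabs_pos sg); lra]).
  destruct (Hf x Hx HPx e He) as [d1 [Hd1 H1]]. destruct (Hg x Hx HPx e He) as [d2 [Hd2 H2]].
  exists (Rmin d1 d2). split; [now apply Rmin_pos|].
  intros y Hy HPy Hyx.
  assert (Hfy : Rabs (f y - f x) < e) by (apply H1; auto; eapply Rlt_le_trans; [exact Hyx | apply Rmin_l]).
  assert (Hgy : Rabs (g y - g x) < e) by (apply H2; auto; eapply Rlt_le_trans; [exact Hyx | apply Rmin_r]).
  replace (sg * (f y - g y) - sg * (f x - g x)) with (sg * ((f y - f x) - (g y - g x))) by ring.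
  rewrite Rabs_mult. assert (Hfg : Rabs ((f y - f x) - (g y - g x)) < 2 * e).
  { unfold Rminus at 1. eapply Rle_lt_trans; [apply Rabs_triang|]. rewrite Rabs_Ropp. lra. }
  assert (E : 2 * e * (Rabs sg + 1) = eps) by (unfold e; field; pose proof (Rabs_pos sg); lra).
  pose proof (Rabs_pos sg). pose proof (Rabs_pos (f y - f x - (g y - g x))). nra.
Qed.

Lemma cont_on_comp d P f h : cont_on d P f -> (forall z, continuity_pt h z) ->
  cont_on d P (fun x => h (f x)).
Proof.
  intros Hf Hh x Hx HPx eps Heps.
  destruct (continuity_pt_ball _ _ (Hh (f x)) eps Heps) as [alp [Halp Hball]].
  destruct (Hf x Hx HPx alp Halp) as [del [Hdel H]].
  exists del. split; auto.
Qed.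

(** * Second derivatives at a maximum *)

Lemma second_derivative_nonpos_at_max (g g1 : R -> R) (l eta : R) : 0 < eta ->
  (forall t, Rabs t < eta -> derivable_pt_lim g t (g1 t)) -> derivable_pt_lim g1 0 l ->
  (forall t, Rabs t < eta -> g t <= g 0) -> l <= 0.
Proof.
  intros Heta Hg Hg1 Hmax.
  assert (Hg10 : g1 0 = 0).
  { assert (H0 : Rabs 0 < eta) by (rewrite Rabs_R0; lra).
    apply (deriv_maximum g (-eta) eta 0 (exist _ (g1 0) (Hg 0 H0))); try lra.
    intros t Ht1 Ht2. apply Hmax, Rabs_def1; lra. }
  apply Rnot_lt_le. intros Hl.
  (* g1 t > 0 for small t > 0, so g increases to the right of its maximum 0 *)
  destruct (Hg1 (l / 2)) as [del Hdel]; [lra|].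
  set (h := Rmin del eta / 2).
  assert (Hh : 0 < h < del /\ h < eta)
    by (pose proof (cond_pos del); unfold h, Rmin; destruct (Rle_dec del eta); lra).
  destruct (MVT_cor2 g g1 0 h) as [c [Hgc Hc]]; [lra| |].
  { intros c Hc. apply Hg, Rabs_def1; lra. }
  assert (Hpos : 0 < g1 c).
  { assert (Hc0 : c <> 0) by lra. assert (Hcd : Rabs c < del) by (rewrite Rabs_right; lra).
    specialize (Hdel c Hc0 Hcd). rewrite Rplus_0_l, Hg10, Rminus_0_r in Hdel.
    apply Rabs_def2 in Hdel. destruct Hdel as [_ Hlow].
    replace (g1 c) with (g1 c / c * c) by (field; lra). nra. }
  assert (g h <= g 0) by (apply Hmax; rewrite Rabs_right; lra).
  nra.
Qed.

Lemma partial_is_along_line u i x t l :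
  partial_is u i (shift x i t) l -> derivable_pt_lim (fun s => u (shift x i s)) t l.
Proof.
  intros H eps Heps. destruct (H eps Heps) as [del Hdel]. exists del.
  intros h Hh Hhd. specialize (Hdel h Hh Hhd).
  rewrite !shift_shift, Rplus_0_l, Rplus_0_r in Hdel. exact Hdel.
Qed.

Ltac derive_by_field :=
  apply is_derive_Reals; auto_derive;
  [repeat split; repeat apply Rmult_integral_contrapositive_currified; lra | field; repeat split; lra].

Lemma derivable_pt_lim_quadratic S a t :
  derivable_pt_lim (fun t => S + 2 * a * t + t ^ 2) t (2 * a + 2 * t).
Proof. derive_by_field. Qed.

Lemma second_partial_le_at_max d U Du phi phi1 phi2 sg p i D2 eta :
  0 < eta -> (i < d)%nat ->
  (forall t, Rabs t < eta -> 0 < sumsq d (shift p i t) /\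
     partial_is U i (shift p i t) (Du (shift p i t)) /\
     sg * (U (shift p i t) - phi (sumsq d (shift p i t))) <= sg * (U p - phi (sumsq d p))) ->
  partial_is Du i p D2 ->
  (forall S, 0 < S -> derivable_pt_lim phi S (phi1 S)) ->
  derivable_pt_lim phi1 (sumsq d p) phi2 ->
  sg * (D2 - (phi2 * (2 * p i) ^ 2 + 2 * phi1 (sumsq d p))) <= 0.
Proof.
  intros Heta Hi Hloc HD2 Hphi Hphi1.
  set (S := sumsq d p) in *. set (a := p i).
  set (quad := fun t => S + 2 * a * t + t ^ 2).
  assert (Hquad : forall t, sumsq d (shift p i t) = quad t) by (intro; now apply sumsq_shift).
  assert (Hquad0 : quad 0 = S) by (unfold quad; ring).
  apply (second_derivative_nonpos_at_max
           (fun t => sg * (U (shift p i t) - phi (quad t)))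
           (fun t => sg * (Du (shift p i t) - phi1 (quad t) * (2 * a + 2 * t))) _ eta Heta).
  - intros t Ht. destruct (Hloc t Ht) as [Hpos [HU _]]. rewrite Hquad in Hpos.
    apply derivable_pt_lim_scal, derivable_pt_lim_minus.
    + now apply partial_is_along_line.
    + apply (derivable_pt_lim_comp quad phi); [apply derivable_pt_lim_quadratic | now apply Hphi].
  - replace (D2 - (phi2 * (2 * a) ^ 2 + 2 * phi1 S))
      with (D2 - (phi2 * (2 * a + 2 * 0) * (2 * a + 2 * 0) + phi1 (quad 0) * 2))
      by (rewrite Hquad0; ring).
    apply derivable_pt_lim_scal, derivable_pt_lim_minus; [exact HD2|].
    apply (derivable_pt_lim_mult (fun t => phi1 (quad t)) (fun t => 2 * a + 2 * t)).
    + apply (derivable_pt_lim_comp quad phi1); [apply derivable_pt_lim_quadratic|].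
      now rewrite Hquad0.
    + derive_by_field.
  - intros t Ht. destruct (Hloc t Ht) as [_ [_ Hmax]].
    rewrite shift0, Hquad0, <- Hquad. exact Hmax.
Qed.

Lemma sum_to_nonpos d a : (forall i, (i < d)%nat -> a i <= 0) -> sum_to d a <= 0.
Proof.
  induction d as [|d IH]; intros Ha; simpl; [lra|].
  assert (a d <= 0) by (apply Ha; lia). assert (sum_to d a <= 0) by (apply IH; intros; apply Ha; lia).
  lra.
Qed.

Lemma sum_to_scal_sub d sg a b :
  sum_to d (fun i => sg * (a i - b i)) = sg * (sum_to d a - sum_to d b).
Proof. induction d; simpl; [ring|]. rewrite IHd. ring. Qed.

Lemma sum_to_affine_sq d A B x :
  sum_to d (fun i => A * x i ^ 2 + B) = A * sumsq d x + B * INR d.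
Proof.
  induction d as [|d IH]; [simpl; ring|].
  change (sum_to d (fun i => A * x i ^ 2 + B) + (A * x d ^ 2 + B)
          = A * (sumsq d x + x d ^ 2) + B * INR (S d)).
  rewrite IH, S_INR. ring.
Qed.

Lemma sumsq_shift_gt1 d p i : 1 < sumsq d p -> (i < d)%nat ->
  exists eta, 0 < eta /\ forall t, Rabs t < eta -> 1 < sumsq d (shift p i t).
Proof.
  intros Hp Hi.
  assert (Hcont : continuity_pt (fun t => sumsq d p + 2 * p i * t + t ^ 2) 0)
    by (apply derivable_continuous_pt; eexists; apply derivable_pt_lim_quadratic).
  destruct (continuity_pt_ball _ _ Hcont (sumsq d p - 1)) as [eta [Heta Hball]]; [lra|].
  exists eta. split; auto. intros t Ht. rewrite sumsq_shift by auto.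
  specialize (Hball t). rewrite Rminus_0_r in Hball. specialize (Hball Ht).
  apply Rabs_def2 in Hball. lra.
Qed.

Lemma laplacian_le_at_max d U Du D2u phi phi1 phi2 sg p :
  inRd d p -> 1 < sumsq d p ->
  (forall x, inRd d x -> 1 < sumsq d x -> forall i, (i < d)%nat -> partial_is U i x (Du i x)) ->
  (forall i, (i < d)%nat -> partial_is (Du i) i p (D2u i i p)) ->
  (forall S, 0 < S -> derivable_pt_lim phi S (phi1 S)) ->
  derivable_pt_lim phi1 (sumsq d p) phi2 ->
  (forall y, inRd d y -> 1 < sumsq d y ->
     sg * (U y - phi (sumsq d y)) <= sg * (U p - phi (sumsq d p))) ->
  sg * (sum_to d (fun i => D2u i i p) - (4 * sumsq d p * phi2 + 2 * INR d * phi1 (sumsq d p))) <= 0.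
Proof.
  intros Hp Hp1 HU HD2 Hphi Hphi1 Hmax.
  assert (Haxis : forall i, (i < d)%nat ->
    sg * (D2u i i p - (phi2 * (2 * p i) ^ 2 + 2 * phi1 (sumsq d p))) <= 0).
  { intros i Hi. destruct (sumsq_shift_gt1 d p i Hp1 Hi) as [eta [Heta Hshift]].
    apply (second_partial_le_at_max d U (Du i) phi phi1 phi2 sg p i _ eta); auto.
    intros t Ht. specialize (Hshift t Ht). pose proof (inRd_shift d p i t Hp Hi).
    repeat split; [lra | now apply HU | now apply Hmax]. }
  pose proof (sum_to_nonpos d _ Haxis) as Hsum.
  rewrite sum_to_scal_sub in Hsum.
  replace (sum_to d (fun i => phi2 * (2 * p i) ^ 2 + 2 * phi1 (sumsq d p)))
    with (sum_to d (fun i => 4 * phi2 * p i ^ 2 + 2 * phi1 (sumsq d p))) in Hsum.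
  - rewrite sum_to_affine_sq in Hsum. now replace (4 * sumsq d p * phi2 + 2 * INR d * phi1 (sumsq d p))
      with (4 * phi2 * sumsq d p + 2 * phi1 (sumsq d p) * INR d) by ring.
  - f_equal. apply functional_extensionality. intro i. ring.
Qed.

(** * Compactness of annuli and the maximum principle *)

Definition strict_increasing (phi : nat -> nat) : Prop := forall n, (phi n < phi (S n))%nat.

Lemma strict_increasing_ge phi : strict_increasing phi -> forall n, (n <= phi n)%nat.
Proof. intros Hphi n. induction n; [lia|]. specialize (Hphi n). lia. Qed.

Lemma strict_increasing_comp phi psi :
  strict_increasing phi -> strict_increasing psi -> strict_increasing (fun n => phi (psi n)).
Proof.
  intros Hphi Hpsi n. specialize (Hpsi n). induction Hpsi as [|m _ IH].
  - apply Hphi.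
  - specialize (Hphi m). lia.
Qed.

Lemma Un_cv_subseq u l phi : strict_increasing phi -> Un_cv u l -> Un_cv (fun n => u (phi n)) l.
Proof.
  intros Hphi Hu eps Heps. destruct (Hu eps Heps) as [N HN]. exists N.
  intros n Hn. apply HN. pose proof (strict_increasing_ge phi Hphi n). lia.
Qed.

(* [next N k] is an index [>= N] at which [u] is within [1/(k+1)] of its cluster point. *)
Fixpoint extraction (next : nat -> nat -> nat) (n : nat) : nat :=
  match n with
  | O => next O O
  | S m => next (S (extraction next m)) (S m)
  end.

Lemma cluster_point_subseq u l : ValAdh u l ->
  exists phi, strict_increasing phi /\ Un_cv (fun n => u (phi n)) l.
Proof.
  intros Hl.
  assert (Hnext : forall N k, exists n, (N <= n)%nat /\ Rabs (u n - l) < / INR (S k)).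
  { intros N k.
    assert (Hk : 0 < / INR (S k)) by (apply Rinv_0_lt_compat, lt_0_INR; lia).
    destruct (Hl (disc l (mkposreal _ Hk)) N) as [n Hn]; [now exists (mkposreal _ Hk)|].
    now exists n. }
  destruct (choice (fun (Nk : nat * nat) n => (fst Nk <= n)%nat /\ Rabs (u n - l) < / INR (S (snd Nk))))
    as [f Hf]; [intros [N k]; apply Hnext|].
  set (next := fun N k => f (N, k)).
  exists (extraction next). split.
  - intro n. simpl. destruct (Hf (S (extraction next n), S n)) as [Hge _]. simpl in Hge. unfold next at 2. lia.
  - intros eps Heps. destruct (archimed_cor1 eps Heps) as [N [HN HN0]].
    exists N. intros n Hn. unfold R_dist.
    assert (Hclose : Rabs (u (extraction next n) - l) < / INR (S n))
      by (destruct n; apply (Hf (_, _))).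
    eapply Rlt_trans; [exact Hclose|]. eapply Rle_lt_trans; [|exact HN].
    apply Rinv_le_contravar; [apply lt_0_INR; lia | apply le_INR; lia].
Qed.

Lemma bounded_seq_cv_subseq u M : (forall n, Rabs (u n) <= M) ->
  exists phi, strict_increasing phi /\ exists l, Un_cv (fun n => u (phi n)) l.
Proof.
  intros Hu.
  destruct (Bolzano_Weierstrass u (fun c => -M <= c <= M) (compact_P3 (-M) M)) as [l Hl].
  { intro n. now apply Rabs_le_between. }
  destruct (cluster_point_subseq u l Hl) as [phi Hphi]. exists phi. split; [apply Hphi|]. now exists l.
Qed.

Lemma coords_cv_subseq d (x : nat -> nat -> R) M :
  (forall n i, (i < d)%nat -> Rabs (x n i) <= M) ->
  exists phi, strict_increasing phi /\
    exists l : nat -> R, forall i, (i < d)%nat -> Un_cv (fun n => x (phi n) i) (l i).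
Proof.
  induction d as [|d IH]; intros Hx.
  - exists (fun n => n). split; [intro; lia|]. exists (fun _ => 0). intros; lia.
  - destruct IH as [phi [Hphi [l Hl]]]; [intros n i Hi; apply Hx; lia|].
    destruct (bounded_seq_cv_subseq (fun n => x (phi n) d) M) as [psi [Hpsi [L HL]]];
      [intro; apply Hx; lia|].
    exists (fun n => phi (psi n)). split; [now apply strict_increasing_comp|].
    exists (fun i => if Nat.eqb i d then L else l i).
    intros i Hi. destruct (Nat.eqb_spec i d) as [->|Hne]; [exact HL|].
    apply (Un_cv_subseq (fun n => x (phi n) i)); [exact Hpsi | apply Hl; lia].
Qed.

Lemma Un_cv_const c : Un_cv (fun _ => c) c.
Proof. intros eps Heps. exists O. intros. unfold R_dist. rewrite Rminus_diag, Rabs_R0. lra. Qed.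

Lemma Un_cv_sumsq d (z : nat -> nat -> R) l :
  (forall i, (i < d)%nat -> Un_cv (fun n => z n i) (l i)) ->
  Un_cv (fun n => sumsq d (z n)) (sumsq d l).
Proof.
  induction d as [|d IH]; intros Hz; [exact (Un_cv_const 0)|].
  apply CV_plus; [apply IH; intros; apply Hz; lia|].
  assert (Hd := Hz d (Nat.lt_succ_diag_r d)).
  apply (Un_cv_ext (fun n => z n d * (z n d * 1))); [intro; reflexivity|].
  apply CV_mult, CV_mult; [exact Hd | exact Hd | apply Un_cv_const].
Qed.

Lemma sumsq_zero d : sumsq d (fun _ => 0) = 0.
Proof. induction d; simpl; [easy|]. rewrite IHd. ring. Qed.

Definition annulus d Rb (y : nat -> R) : Prop := inRd d y /\ 1 <= sumsq d y <= Rb.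

Lemma annulus_seq_cv_subseq d Rb (x : nat -> nat -> R) : (forall n, annulus d Rb (x n)) ->
  exists p phi, annulus d Rb p /\ strict_increasing phi /\
    forall eps, 0 < eps -> exists N, forall n, (N <= n)%nat -> norm d (vsub (x (phi n)) p) < eps.
Proof.
  intros Hx.
  assert (Hbound : forall n i, (i < d)%nat -> Rabs (x n i) <= 1 + Rb).
  { intros n i Hi. destruct (Hx n) as [_ [H1 H2]]. pose proof (sq_le_sumsq d (x n) i Hi).
    rewrite <- (pow2_abs (x n i)) in H. pose proof (Rabs_pos (x n i)). nra. }
  destruct (coords_cv_subseq d x _ Hbound) as [phi [Hphi [l Hl]]].
  set (p := fun i => if Nat.ltb i d then l i else 0).
  assert (Hpl : forall i, (i < d)%nat -> p i = l i)
    by (intros i Hi; unfold p; now replace (Nat.ltb i d) with true by (symmetry; now apply Nat.ltb_lt)).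
  assert (Hcv : forall i, (i < d)%nat -> Un_cv (fun n => x (phi n) i) (p i))
    by (intros i Hi; rewrite Hpl; auto).
  assert (Hsumsq : Un_cv (fun n => sumsq d (x (phi n))) (sumsq d p)) by now apply Un_cv_sumsq.
  assert (Hdist : Un_cv (fun n => sumsq d (vsub (x (phi n)) p)) 0).
  { rewrite <- (sumsq_zero d). apply Un_cv_sumsq. intros i Hi.
    rewrite <- (Rminus_diag (p i)). apply CV_minus; [now apply Hcv | apply Un_cv_const]. }
  exists p, phi. split; [|split; [exact Hphi|]].
  - split; [intros i Hi; unfold p; now replace (Nat.ltb i d) with false by (symmetry; now apply Nat.ltb_ge)|].
    split.
    + refine (Rle_cv_lim (fun n => proj1 (proj2 (Hx (phi n)))) _ Hsumsq). apply Un_cv_const.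
    + refine (Rle_cv_lim (fun n => proj2 (proj2 (Hx (phi n)))) Hsumsq _). apply Un_cv_const.
  - intros eps Heps. destruct (Hdist (eps ^ 2)) as [N HN]; [now apply pow_lt|].
    exists N. intros n Hn. specialize (HN n Hn). unfold R_dist in HN.
    rewrite Rminus_0_r, Rabs_right in HN by apply Rle_ge, sumsq_nonneg.
    apply norm_lt_iff; [lra | exact HN].
Qed.

Lemma cont_on_annulus d Rb w : cont_on d (fun x => 1 <= norm d x) w ->
  forall p, annulus d Rb p -> forall eps, 0 < eps -> exists del, 0 < del /\
    forall y, annulus d Rb y -> norm d (vsub y p) < del -> Rabs (w y - w p) < eps.
Proof.
  intros Hw p [Hp [Hp1 _]] eps Heps.
  destruct (Hw p Hp (proj2 (le_norm_iff d p 1 ltac:(lra)) ltac:(lra)) eps Heps) as [del [Hdel H]].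
  exists del. split; auto. intros y [Hy [Hy1 _]]. apply H; auto. apply le_norm_iff; lra.
Qed.

Lemma annulus_attains_max_of_bounded d Rb w : cont_on d (fun x => 1 <= norm d x) w ->
  (exists B, forall y, annulus d Rb y -> w y <= B) -> (exists x0, annulus d Rb x0) ->
  exists p, annulus d Rb p /\ forall y, annulus d Rb y -> w y <= w p.
Proof.
  intros Hw [B HB] [x0 Hx0].
  destruct (completeness (fun v => exists y, annulus d Rb y /\ v = w y)) as [s [Hub Hlub]].
  - exists B. intros v [y [Hy ->]]. auto.
  - now exists (w x0), x0.
  - assert (Happrox : forall n, exists y, annulus d Rb y /\ s - / INR (S n) < w y).
    { intro n. apply NNPP. intro Hno.
      assert (Hn : 0 < / INR (S n)) by (apply Rinv_0_lt_compat, lt_0_INR; lia).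
      enough (s <= s - / INR (S n)) by lra.
      apply Hlub. intros v [y [Hy ->]]. apply Rnot_lt_le. intro Hlt. apply Hno. now exists y. }
    destruct (choice _ Happrox) as [x Hx].
    destruct (annulus_seq_cv_subseq d Rb x (fun n => proj1 (Hx n))) as [p [phi [Hp [Hphi Hcv]]]].
    exists p. split; [exact Hp|].
    enough (Hsp : s <= w p) by (intros y Hy; eapply Rle_trans; [apply Hub; now exists y | exact Hsp]).
    apply Rnot_lt_le. intro Hlt. set (eps := (s - w p) / 2).
    destruct (cont_on_annulus d Rb w Hw p Hp eps) as [del [Hdel Hclose]]; [unfold eps; lra|].
    destruct (Hcv del Hdel) as [N1 HN1].
    destruct (archimed_cor1 eps) as [N2 [HN2 HN2pos]]; [unfold eps; lra|].
    set (n := Nat.max N1 N2).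
    assert (Hwn : Rabs (w (x (phi n)) - w p) < eps) by (apply Hclose; [apply Hx | apply HN1; lia]).
    assert (Hsn : s - / INR (S (phi n)) < w (x (phi n))) by apply Hx.
    assert (Hinv : / INR (S (phi n)) <= / INR N2).
    { apply Rinv_le_contravar; [apply lt_0_INR; lia|]. apply le_INR.
      pose proof (strict_increasing_ge phi Hphi n). lia. }
    apply Rabs_def2 in Hwn. unfold eps in *. lra.
Qed.

Lemma annulus_attains_max d Rb w : cont_on d (fun x => 1 <= norm d x) w ->
  (exists x0, annulus d Rb x0) ->
  exists p, annulus d Rb p /\ forall y, annulus d Rb y -> w y <= w p.
Proof.
  intros Hw Hx0.
  (* atan is increasing and bounded, so a maximum of atan o w is one of w *)
  destruct (annulus_attains_max_of_bounded d Rb (fun x => atan (w x))) as [p [Hp Hmax]]; auto.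
  - apply cont_on_comp; [exact Hw|]. intro z. apply derivable_continuous_pt, derivable_pt_atan.
  - exists (PI / 2). intros y _. pose proof (atan_bound (w y)). lra.
  - exists p. split; [exact Hp|]. intros y Hy. apply Rnot_lt_le. intro Hlt.
    specialize (Hmax y Hy). pose proof (atan_increasing _ _ Hlt). lra.
Qed.

Lemma exterior_max_principle d w : cont_on d (fun x => 1 <= norm d x) w ->
  (forall x, inRd d x -> norm d x = 1 -> w x <= 0) ->
  (forall eps, 0 < eps -> exists M, forall x, inRd d x -> M < norm d x -> w x < eps) ->
  (forall p, inRd d p -> 1 < norm d p -> 0 < w p ->
     (forall y, inRd d y -> 1 <= norm d y -> w y <= w p) -> False) ->
  forall x, inRd d x -> 1 <= norm d x -> w x <= 0.
Proof.
  intros Hw Hsphere Hinf Hinterior x Hx Hx1. apply Rnot_lt_le. intro Hpos.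
  destruct (Hinf (w x) Hpos) as [M HM].
  set (Rb := Rmax (M ^ 2) (sumsq d x) + 1).
  assert (Hfar : forall y, inRd d y -> Rb < sumsq d y -> w y < w x).
  { intros y Hy Hyb. apply HM; auto. eapply Rle_lt_trans; [apply Rle_abs|].
    apply lt_norm_iff; [apply Rabs_pos|]. rewrite pow2_abs.
    pose proof (Rmax_l (M ^ 2) (sumsq d x)). unfold Rb in Hyb. lra. }
  assert (Hxa : annulus d Rb x).
  { split; [exact Hx|]. split; [now apply le_norm_iff in Hx1; [rewrite pow1 in Hx1 | lra]|].
    pose proof (Rmax_r (M ^ 2) (sumsq d x)). unfold Rb. lra. }
  destruct (annulus_attains_max d Rb w Hw) as [p [[Hp [Hp1 HpR]] Hmax]]; [now exists x|].
  assert (Hwp : w x <= w p) by now apply Hmax.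
  apply (Hinterior p Hp).
  - apply lt_norm_iff; [lra|]. destruct Hp1 as [Hlt | Heq]; [simpl; lra|].
    specialize (Hsphere p Hp (proj2 (norm_eq1_iff d p) (eq_sym Heq))). lra.
  - lra.
  - intros y Hy Hy1. destruct (Rle_lt_dec (sumsq d y) Rb) as [HyR | HyR].
    + apply Hmax. split; [exact Hy|]. split; [|exact HyR].
      apply le_norm_iff in Hy1; [simpl in Hy1; lra | lra].
    + specialize (Hfar y Hy HyR). lra.
Qed.

(** * The comparison principle *)

Section Comparison.

Variables (d : nat) (U : (nat -> R) -> R).
Hypothesis U_nonneg : forall x, inRd d x -> 1 <= norm d x -> 0 <= U x.
Hypothesis U_cont : cont_on d (fun x => 1 <= norm d x) U.
Hypothesis U_solves : C2_with_laplacian d (fun x => 1 < norm d x) U (fun x => U x ^ 2).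

(* [4 S phi'' + 2 d phi'] is the Laplacian of [x |-> phi (|x|^2)] at [S = |x|^2]. *)
Lemma radial_comparison sg phi phi1 phi2 :
  (forall S, 0 < S -> derivable_pt_lim phi S (phi1 S)) ->
  (forall S, 0 < S -> derivable_pt_lim phi1 S (phi2 S)) ->
  (forall S, 1 < S -> 0 <= phi S) ->
  (forall S, 1 < S -> sg * (4 * S * phi2 S + 2 * INR d * phi1 S - phi S ^ 2) <= 0) ->
  (forall x, inRd d x -> norm d x = 1 -> sg * (U x - phi (sumsq d x)) <= 0) ->
  (forall eps, 0 < eps -> exists M, forall x, inRd d x -> M < norm d x ->
     sg * (U x - phi (sumsq d x)) < eps) ->
  forall x, inRd d x -> 1 <= norm d x -> sg * (U x - phi (sumsq d x)) <= 0.
Proof.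
  intros Hphi Hphi1 Hphi_nonneg Hradial Hsphere Hinf.
  destruct U_solves as [Du [D2u HC2]].
  apply exterior_max_principle; auto.
  - apply cont_on_scal_sub; [exact U_cont|]. apply cont_on_radial.
    + intros y Hy. apply le_norm_iff in Hy; simpl in Hy; lra.
    + intros S HS. apply derivable_continuous_pt. eexists. now apply Hphi.
  - intros p Hp Hp1 Hwp Hmax.
    assert (HS : 1 < sumsq d p) by (apply lt_norm_iff in Hp1; simpl in Hp1; lra).
    destruct (HC2 p Hp Hp1) as [_ [Hpartials Hlap]].
    pose proof (laplacian_le_at_max d U Du D2u phi phi1 (phi2 (sumsq d p)) sg p Hp HS) as Hlap_le.
    rewrite <- Hlap in Hlap_le.
    assert (HUp : 0 <= U p) by (apply U_nonneg; auto; lra).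
    assert (Hphip := Hphi_nonneg _ HS). specialize (Hradial _ HS).
    assert (Hsq : sg * (U p ^ 2 - phi (sumsq d p) ^ 2) <= 0).
    { enough (sg * (U p ^ 2 - (4 * sumsq d p * phi2 (sumsq d p) + 2 * INR d * phi1 (sumsq d p))) <= 0)
        by lra.
      apply Hlap_le; auto.
      - intros x Hx Hx1 i Hi.
        destruct (HC2 x Hx (proj2 (lt_norm_iff d x 1 ltac:(lra)) ltac:(lra))) as [_ [Hpart _]].
        apply (Hpart i Hi).
      - intros i Hi. destruct (Hpartials i Hi) as [_ [_ Hsecond]]. apply (Hsecond i Hi).
      - apply Hphi1. lra.
      - intros y Hy Hy1. apply Hmax; auto. apply le_norm_iff; lra. }
    (* as [U p, phi >= 0], [U p ^ 2 - phi ^ 2] has the sign of [U p - phi] *)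
    assert (0 < U p + phi (sumsq d p)) by (destruct (Req_dec (U p) (phi (sumsq d p))); nra).
    nra.
Qed.

End Comparison.

(** * The upper barrier *)

Lemma Vinf_sumsq d x : Vinf d x = 2 * (4 - INR d) / sumsq d x.
Proof. unfold Vinf. now rewrite norm_sq. Qed.

Lemma U_le_Vinf d lam U : 0 <= lam <= 2 * (4 - INR d) -> is_U_lam1 d lam U ->
  forall x, inRd d x -> 1 <= norm d x -> U x <= Vinf d x.
Proof.
  intros Hlam [HU0 [HUc [HU2 [HUsphere HUinf]]]] x Hx Hx1.
  set (c := 2 * (4 - INR d)) in *.
  enough (1 * (U x - c / sumsq d x) <= 0) by (rewrite Vinf_sumsq; fold c; lra).
  revert x Hx Hx1.
  apply (radial_comparison d U HU0 HUc HU2 1 (fun S => c / S) (fun S => - c / S ^ 2)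
           (fun S => 2 * c / S ^ 3)).
  - intros S HS. derive_by_field.
  - intros S HS. derive_by_field.
  - intros S HS. apply Rdiv_le_0_compat; lra.
  - intros S HS. apply Req_le. unfold c. field. lra.
  - intros x Hx Hx1. rewrite (HUsphere x Hx Hx1), (proj1 (norm_eq1_iff d x) Hx1). lra.
  - intros eps Heps. destruct (HUinf eps Heps) as [M HM]. exists (Rmax 1 M).
    intros x Hx Hxn. specialize (HM x Hx (Rle_lt_trans _ _ _ (Rmax_r 1 M) Hxn)).
    assert (HS : 0 < sumsq d x).
    { apply lt_norm_iff in Hxn; [|pose proof (Rmax_l 1 M); lra].
      pose proof (Rmax_l 1 M). nra. }
    assert (0 <= c / sumsq d x) by (apply Rdiv_le_0_compat; lra).
    pose proof (Rle_abs (U x)). lra.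
Qed.

(** * The lower barrier *)

Definition qrt (S : R) : R := sqrt (sqrt S).

Lemma qrt_pos S : 0 < S -> 0 < qrt S.
Proof. intros HS. now apply sqrt_lt_R0, sqrt_lt_R0. Qed.

Lemma qrt_sq S : qrt S ^ 2 = sqrt S.
Proof. unfold qrt. rewrite pow2_sqrt; [easy | apply sqrt_pos]. Qed.

Lemma qrt_pow4 S : 0 <= S -> qrt S ^ 4 = S.
Proof. intros HS. replace (qrt S ^ 4) with ((qrt S ^ 2) ^ 2) by ring. now rewrite qrt_sq, pow2_sqrt. Qed.

Lemma derivable_pt_lim_comp_qrt f g S : 0 < S ->
  derivable_pt_lim f (qrt S) (g (qrt S) * (4 * qrt S ^ 3)) ->
  derivable_pt_lim (fun S => f (qrt S)) S (g (qrt S)).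
Proof.
  intros HS Hf. pose proof (qrt_pos S HS) as Hy.
  assert (Hqrt : derivable_pt_lim qrt S (/ (4 * qrt S ^ 3))).
  { apply is_derive_Reals. unfold qrt. auto_derive.
    - repeat split; auto using sqrt_lt_R0.
    - pose proof (qrt_sq S) as Hsq. unfold qrt in Hy, Hsq |- *.
      set (y := sqrt (sqrt S)) in *. rewrite <- Hsq. field. lra. }
  replace (g (qrt S)) with (g (qrt S) * (4 * qrt S ^ 3) * / (4 * qrt S ^ 3)) by (field; lra).
  exact (derivable_pt_lim_comp qrt f S _ _ Hqrt Hf).
Qed.

(* In terms of [r = |x|] the lower barrier is [c / (r (sqrt r + b) ^ 2)], written as a function of
   [y = qrt (|x|^2) = sqrt r]; [lower_profile1] and [lower_profile2] are its first two derivatives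
   with respect to [S = |x|^2 = y^4]. *)
Definition lower_profile (c b y : R) : R := c / (y ^ 2 * (y + b) ^ 2).
Definition lower_profile1 (c b y : R) : R := - c * (2 * y + b) / (2 * y ^ 6 * (y + b) ^ 3).
Definition lower_profile2 (c b y : R) : R :=
  c * (16 * y ^ 2 + 19 * b * y + 6 * b ^ 2) / (8 * y ^ 10 * (y + b) ^ 4).

Lemma lower_profile_derivable c b y : 0 < y -> 0 < b ->
  derivable_pt_lim (lower_profile c b) y (lower_profile1 c b y * (4 * y ^ 3)).
Proof. intros Hy Hb. unfold lower_profile, lower_profile1. derive_by_field. Qed.

Lemma lower_profile1_derivable c b y : 0 < y -> 0 < b ->
  derivable_pt_lim (lower_profile1 c b) y (lower_profile2 c b y * (4 * y ^ 3)).
Proof. intros Hy Hb. unfold lower_profile1, lower_profile2. derive_by_field. Qed.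

Lemma lower_profile_subsolution d b y : (d <= 3)%nat -> 0 < y -> 0 < b ->
  let c := 2 * (4 - INR d) in
  lower_profile c b y ^ 2 <= 4 * y ^ 4 * lower_profile2 c b y + 2 * INR d * lower_profile1 c b y.
Proof.
  intros Hd Hy Hb c.
  assert (Hd3 : INR d <= 3) by (apply le_INR in Hd; simpl in Hd; lra).
  unfold lower_profile, lower_profile1, lower_profile2.
  set (e := c * ((19 / 2 - 3 * INR d) * b * y + (3 - INR d) * b ^ 2) / (y ^ 6 * (y + b) ^ 4)).
  assert (He : 0 <= e).
  { apply Rdiv_le_0_compat; [|apply Rmult_lt_0_compat; apply pow_lt; lra].
    apply Rmult_le_pos; [unfold c; lra|].
    assert (0 <= (19 / 2 - 3 * INR d) * b * y) by (apply Rmult_le_pos; [apply Rmult_le_pos|]; lra).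
    assert (0 <= (3 - INR d) * b ^ 2) by (apply Rmult_le_pos; [lra | apply pow2_ge_0]).
    lra. }
  (* c = 8 - 2 d cancels the y^2 terms of the difference; d <= 3 makes the other coefficients nonnegative *)
  match goal with |- ?l <= ?r => enough (r - l = e) by lra end.
  unfold e, c. field. lra.
Qed.

Lemma lower_profile_le c b y : 0 < y -> 0 < b -> 0 <= c -> lower_profile c b y <= c / y ^ 4.
Proof.
  intros Hy Hb Hc. unfold lower_profile. apply Rmult_le_compat_l; [lra|].
  apply Rinv_le_contravar; [apply pow_lt; lra|].
  replace (y ^ 4) with (y ^ 2 * y ^ 2) by ring.
  apply Rmult_le_compat_l; [apply pow_le; lra | apply pow_incr; lra].
Qed.

Lemma lower_profile_ge c b y s : 0 < y -> 0 < b -> 0 <= c -> 0 < s < 1 -> s / (1 - s) * b <= y ->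
  s ^ 2 * (c / y ^ 4) <= lower_profile c b y.
Proof.
  intros Hy Hb Hc Hs Hyb.
  assert (Hsy : s * (y + b) <= y).
  { apply (Rmult_le_compat_r (1 - s)) in Hyb; [|lra].
    replace (s / (1 - s) * b * (1 - s)) with (s * b) in Hyb by (field; lra). nra. }
  assert (Hsq : s ^ 2 * (y + b) ^ 2 <= y ^ 2).
  { rewrite <- Rpow_mult_distr. apply pow_incr. nra. }
  unfold lower_profile.
  replace (s ^ 2 * (c / y ^ 4)) with (c * (s ^ 2 * (y + b) ^ 2) / (y ^ 4 * (y + b) ^ 2))
    by (field; lra).
  replace (c / (y ^ 2 * (y + b) ^ 2)) with (c * y ^ 2 / (y ^ 4 * (y + b) ^ 2)) by (field; lra).
  apply Rmult_le_compat_r; [left; apply Rinv_0_lt_compat, Rmult_lt_0_compat; apply pow_lt; lra|].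
  now apply Rmult_le_compat_l.
Qed.

Lemma lower_barrier_le_U d lam U b : (d <= 3)%nat -> 0 < b ->
  2 * (4 - INR d) <= lam * (1 + b) ^ 2 -> is_U_lam1 d lam U ->
  forall x, inRd d x -> 1 <= norm d x ->
    lower_profile (2 * (4 - INR d)) b (qrt (sumsq d x)) <= U x.
Proof.
  intros Hd Hb Hsphere_val [HU0 [HUc [HU2 [HUsphere HUinf]]]] x Hx Hx1.
  assert (Hc : 0 < 2 * (4 - INR d)) by (apply le_INR in Hd; simpl in Hd; lra).
  set (c := 2 * (4 - INR d)) in *.
  enough (-1 * (U x - lower_profile c b (qrt (sumsq d x))) <= 0) by lra.
  revert x Hx Hx1.
  apply (radial_comparison d U HU0 HUc HU2 (-1) (fun S => lower_profile c b (qrt S))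
           (fun S => lower_profile1 c b (qrt S)) (fun S => lower_profile2 c b (qrt S))).
  - intros S HS. apply (derivable_pt_lim_comp_qrt (lower_profile c b)); [exact HS|].
    apply lower_profile_derivable; auto using qrt_pos.
  - intros S HS. apply (derivable_pt_lim_comp_qrt (lower_profile1 c b)); [exact HS|].
    apply lower_profile1_derivable; auto using qrt_pos.
  - intros S HS. pose proof (qrt_pos S ltac:(lra)). unfold lower_profile.
    apply Rdiv_le_0_compat; [lra | apply Rmult_lt_0_compat; apply pow_lt; lra].
  - intros S HS. pose proof (qrt_pos S ltac:(lra)) as Hy.
    pose proof (lower_profile_subsolution d b (qrt S) Hd Hy Hb) as Hsub.
    rewrite qrt_pow4 in Hsub by lra. fold c in Hsub. lra.
  - intros x Hx Hx1. rewrite (HUsphere x Hx Hx1), (proj1 (norm_eq1_iff d x) Hx1).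
    unfold qrt, lower_profile. rewrite !sqrt_1.
    enough (c / (1 ^ 2 * (1 + b) ^ 2) <= lam) by lra.
    apply Rle_div_l; [simpl; nra | simpl; lra].
  - intros eps Heps. exists (Rmax 1 (c / eps)). intros x Hx Hxn.
    assert (H1 : 1 < norm d x) by (eapply Rle_lt_trans; [apply Rmax_l | exact Hxn]).
    assert (Hce : c / eps < norm d x) by (eapply Rle_lt_trans; [apply Rmax_r | exact Hxn]).
    assert (HS : norm d x < sumsq d x) by (rewrite <- norm_sq; nra).
    assert (Hy : 0 < qrt (sumsq d x)) by (apply qrt_pos; lra).
    pose proof (lower_profile_le c b _ Hy Hb ltac:(lra)) as Hle.
    rewrite qrt_pow4 in Hle by lra.
    assert (c / sumsq d x < eps).
    { apply Rlt_div_l; [lra|]. apply Rlt_div_l in Hce; [|lra]. nra. }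
    assert (0 <= U x) by (apply HU0; auto; lra). lra.
Qed.

Lemma Vinf_fraction_le_U d s lam U x : (d <= 3)%nat -> 0 < s < 1 -> 0 < lam ->
  is_U_lam1 d lam U -> inRd d x -> 1 <= norm d x ->
  (s / (1 - s)) ^ 2 * (2 * (4 - INR d)) / lam <= norm d x ->
  s ^ 2 * Vinf d x <= U x.
Proof.
  intros Hd Hs Hlam HU Hx Hx1 Hfar.
  assert (Hc : 0 < 2 * (4 - INR d)) by (apply le_INR in Hd; simpl in Hd; lra).
  set (c := 2 * (4 - INR d)) in *.
  set (b := sqrt (c / lam)).
  assert (Hb2 : b ^ 2 = c / lam) by (apply pow2_sqrt; apply Rdiv_le_0_compat; lra).
  assert (Hb : 0 < b) by (apply sqrt_lt_R0, Rdiv_lt_0_compat; lra).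
  assert (HS : 0 < sumsq d x) by (apply le_norm_iff in Hx1; simpl in Hx1; lra).
  set (y := qrt (sumsq d x)).
  assert (Hy : 0 < y) by now apply qrt_pos.
  assert (Hyb : s / (1 - s) * b <= y).
  { assert (Hk : 0 <= s / (1 - s)) by (apply Rdiv_le_0_compat; lra).
    assert (Hsq : (s / (1 - s) * b) ^ 2 <= y ^ 2).
    { unfold y. rewrite qrt_sq, Rpow_mult_distr, Hb2. fold (norm d x).
      replace ((s / (1 - s)) ^ 2 * (c / lam)) with ((s / (1 - s)) ^ 2 * c / lam) by (field; lra).
      exact Hfar. }
    nra. }
  assert (HS4 : sumsq d x = y ^ 4) by (unfold y; rewrite qrt_pow4; lra).
  rewrite Vinf_sumsq. fold c. rewrite HS4.
  eapply Rle_trans; [exact (lower_profile_ge c b y s Hy Hb ltac:(lra) Hs Hyb)|].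
  apply (lower_barrier_le_U d lam U b Hd Hb); auto.
  fold c. replace c with (lam * b ^ 2) by (rewrite Hb2; field; lra).
  apply Rmult_le_compat_l; [lra | apply pow_incr; lra].
Qed.

Theorem proposition3p3 (d : nat) (Hd : (1 <= d <= 3)%nat) :
  (forall (delta0 : R), 0 < delta0 < 1 ->
     forall U, is_U_lam1 d delta0 U ->
       forall x, inRd d x -> 1 < norm d x -> U x <= Vinf d x) /\
  (forall (delta : R), 0 < delta < 1 ->
     exists Cdelta : R, 1 < Cdelta /\
       forall (delta0 : R), 0 < delta0 < 1 ->
         forall U, is_U_lam1 d delta0 U ->
           forall x, inRd d x -> Cdelta / delta0 <= norm d x ->
             (1 - delta) * Vinf d x <= U x).
Proof.
  assert (Hc : 2 <= 2 * (4 - INR d) <= 8)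
    by (destruct Hd as [_ Hd3]; apply le_INR in Hd3; simpl in Hd3; pose proof (pos_INR d); lra).
  split.
  - intros delta0 Hdelta0 U HU x Hx Hx1. apply (U_le_Vinf d delta0 U); auto; lra.
  - intros delta Hdelta.
    set (s := sqrt (1 - delta)).
    assert (Hs2 : s ^ 2 = 1 - delta) by (apply pow2_sqrt; lra).
    assert (Hs : 0 < s < 1) by (assert (0 < s) by (apply sqrt_lt_R0; lra); split; nra).
    set (kap := s / (1 - s)).
    assert (Hkap : 0 < kap ^ 2) by (apply pow_lt, Rdiv_lt_0_compat; lra).
    exists (1 + 8 * kap ^ 2). split; [lra|].
    intros delta0 Hdelta0 U HU x Hx Hfar. rewrite <- Hs2.
    apply (Vinf_fraction_le_U d s delta0 U x); try tauto.
    + enough (1 < (1 + 8 * kap ^ 2) / delta0) by lra.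
      apply Rlt_div_r; lra.
    + eapply Rle_trans; [|exact Hfar]. apply Rmult_le_compat_r; [left; apply Rinv_0_lt_compat; lra|].
      fold kap. nra.
Qed.
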